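(* Let $G$ be a tree with $n\ge k$ vertices and $k\in\{2,3\}$. Then every transition edge between two adjacent configurations of $k$ agents with distinct vertex sets is a $1$-transition edge, and consequently $h^r_k(G)=h_k(G)$.
   Context: All graphs are finite, simple, undirected and connected. A configuration of $k$ agents is a $k$-tuple $(v_1,\dots,v_k)$ of pairwise distinct vertices of $G$ whose induced subgraph is connected; it is identified with its vertex set when convenient. Two configurations $(v_1,\dots,v_k)$, $(v'_1,\dots,v'_k)$ are adjacent if for every $i$ either $v_i=v'_i$ or $(v_i,v'_i)\in E$. The transition edge between adjacent configurations $\mathcal C,\mathcal C'$ is an $r$-transition edge if exactly $r$ vertices of $\mathcal C'$ are not in $\mathcal C$. A transition walk of length $l$ is a sequence $\mathcal C_0,\dots,\mathcal C_l$ of configurations with consecutive ones adjacent; it is spanning if every vertex of $G$ lies in some $\mathcal C_t$. $h_k(G)$ is the minimum length of a spanning transition walk with $k$ agents. $h^r_k(G)$ is the minimum length of a spanning transition walk with $k$ agents in which every pair of consecutive configurations is joined by a $1$-transition edge (the restricted problem $k$-RHWP). *)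

From mathcomp Require Import all_boot.
Set Implicit Arguments. Unset Strict Implicit. Unset Printing Implicit Defensive.

(* A simple graph: vertex type T : finType, symmetric irreflexive relation e. *)

Definition acyclic (T : finType) (e : rel T) : Prop :=
  forall s : seq T, uniq s -> 3 <= size s -> ~~ cycle e s.

Definition gconnected (T : finType) (e : rel T) : Prop :=
  forall x y : T, connect e x y.

Definition is_tree (T : finType) (e : rel T) : Prop :=
  gconnected e /\ acyclic e.

Definition is_config (T : finType) (e : rel T) (k : nat) (c : k.-tuple T) : Prop :=
  uniq c /\
  forall x y, x \in c -> y \in c ->
    connect [rel a b | [&& e a b, a \in c & b \in c]] x y.

Definition adj_config (T : finType) (e : rel T) (k : nat) (c c' : k.-tuple T) : bool :=
  [forall i : 'I_k, (tnth c i == tnth c' i) || e (tnth c i) (tnth c' i)].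

Definition r_transition (T : finType) (k r : nat) (c c' : k.-tuple T) : Prop :=
  #|[set v in c' | v \notin c]| = r.

(* A transition walk C_0, ..., C_l is given by c0 and the list [C_1;...;C_l];
   its length is l = size s. *)
Definition is_walk (T : finType) (e : rel T) (k : nat)
    (c0 : k.-tuple T) (s : seq (k.-tuple T)) : Prop :=
  (forall c, c \in c0 :: s -> is_config e c) /\ path (@adj_config T e k) c0 s.

Definition spanning (T : finType) (k : nat) (c0 : k.-tuple T) (s : seq (k.-tuple T)) : Prop :=
  forall v : T, exists2 c, c \in c0 :: s & v \in c.

Definition restricted (T : finType) (k : nat) (c0 : k.-tuple T) (s : seq (k.-tuple T)) : Prop :=
  path (fun c c' => #|[set v in c' | v \notin c]| == 1) c0 s.

Definition spanning_len (T : finType) (e : rel T) (k l : nat) : Prop :=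
  exists (c0 : k.-tuple T) (s : seq (k.-tuple T)), [/\ is_walk e c0 s, spanning c0 s & size s = l].

Definition rspanning_len (T : finType) (e : rel T) (k l : nat) : Prop :=
  exists (c0 : k.-tuple T) (s : seq (k.-tuple T)), [/\ is_walk e c0 s, spanning c0 s, restricted c0 s & size s = l].

Definition is_min (P : nat -> Prop) (m : nat) : Prop :=
  P m /\ forall l, P l -> m <= l.

Definition h_is (T : finType) (e : rel T) (k m : nat) : Prop := is_min (spanning_len e k) m.
Definition hr_is (T : finType) (e : rel T) (k m : nat) : Prop := is_min (rspanning_len e k) m.

From mathcomp Require Import all_boot.
From Stdlib Require Import Classical.
Set Implicit Arguments. Unset Strict Implicit. Unset Printing Implicit Defensive.

(* In a tree, a connected set of at most three vertices is connected through
   itself by paths of length at most two.  If a move between adjacent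
   configurations brought in two new vertices, the agents arriving there come
   from distinct old vertices, and joining these through the old configuration
   closes a cycle.  So every move changing the vertex set is a 1-transition,
   while moves that merely permute the agents can be deleted from a walk after
   relabelling the agents; this turns a spanning walk into a restricted one
   that is no longer.  Spanning walks exist at all because the agents can
   crawl like a snake along a path through every vertex. *)

Section SmallConfig.

Variables (T : finType) (e : rel T) (k : nat) (c : k.-tuple T).
Hypotheses (k_le3 : k <= 3) (c_config : is_config e c).

Lemma config_dist2 x y : x \in c -> y \in c -> x != y ->
  e x y \/ exists2 w, w \in c & [/\ w != x, w != y, e x w & e w y].
Proof.
move=> xc yc xy; have [c_uniq c_conn] := c_config.
have /connectP [q q_path y_last] := c_conn x y xc yc.
case: (shortenP q_path) y_last => p p_path p_uniq p_sub y_last.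
have p_in_c z : z \in p -> z \in c.
  move=> /p_sub zp; have [i ltiq ->] : exists2 i, i < size q & z = nth x q i.
    by exists (index z q); rewrite ?index_mem ?nth_index.
  by have /and3P [] := pathP x q_path i ltiq.
have size_p : size (x :: p) <= 3.
  apply: leq_trans (_ : size c <= 3); last by rewrite size_tuple.
  by apply: uniq_leq_size => // z; rewrite inE => /predU1P [->|/p_in_c].
case: p p_path p_uniq y_last size_p p_in_c {p_sub q_path} => [|y1 [|y2 []]] //=.
- by move=> _ _ yx; rewrite yx eqxx in xy.
- by move=> /andP [/and3P [exy1 _ _] _] _ ->; left.
- move=> /and3P [/and3P [exy1 _ _] /and3P [ey1y2 _ _] _] p_uniq -> _ p_in_c.
  right; exists y1; first by apply: p_in_c; rewrite mem_head.
  move: p_uniq; rewrite !inE !negb_or => /andP [/andP [xy1 _] /andP [y1y2 _]].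
  by split; rewrite // eq_sym.
Qed.

Hypotheses (e_sym : symmetric e) (e_acyclic : acyclic e).

(* Closing the path by the short connection inside [c] given by
   [config_dist2] yields a cycle. *)
Lemma config_no_outer_path a b p :
  a \in c -> b \in c -> a != b -> uniq p -> p != [::] -> all [predC c] p ->
  ~~ path e a (rcons p b).
Proof.
move=> ac bc ab p_uniq p_nil p_out; apply/negP => ab_path.
have out_p z : z \in c -> z \notin p.
  by move=> zc; apply/negP => /(allP p_out); rewrite /= zc.
have size_p : 0 < size p by case: p p_nil {p_uniq p_out out_p ab_path}.
have no_cycle s : uniq s -> 3 <= size s -> cycle e s -> False.
  by move=> s_uniq s_size; apply/negP/e_acyclic.
case: (config_dist2 ac bc ab) => [eab | [w wc [wa wb eaw ewb]]].
- apply: (no_cycle (a :: rcons p b)).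
  + by rewrite /= mem_rcons inE negb_or ab out_p //= rcons_uniq out_p.
  + by rewrite /= size_rcons !ltnS.
  + by rewrite /= rcons_path ab_path last_rcons e_sym.
- apply: (no_cycle (a :: rcons (rcons p b) w)).
  + rewrite /= mem_rcons inE negb_or eq_sym wa mem_rcons inE negb_or ab out_p //=.
    by rewrite !rcons_uniq mem_rcons inE negb_or wb !out_p.
  + by rewrite /= !size_rcons !ltnS ltnW.
  + by rewrite /= 2!rcons_path ab_path !last_rcons (e_sym b w) (e_sym w a) ewb eaw.
Qed.

Lemma config_no_outer_path2 a b q :
  a \in c -> b \in c -> a != b -> q \notin c -> e a q -> e q b -> False.
Proof.
move=> ac bc ab qc aq qb.
by apply: (negP (config_no_outer_path ac bc ab (p := [:: q]) _ _ _));
  rewrite /= ?inE ?qc ?aq ?qb.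
Qed.

Lemma config_no_outer_path3 a b p q :
  a \in c -> b \in c -> a != b -> p \notin c -> q \notin c -> p != q ->
  e a p -> e p q -> e q b -> False.
Proof.
move=> ac bc ab pc qc pq ap pq_edge qb.
by apply: (negP (config_no_outer_path ac bc ab (p := [:: p; q]) _ _ _));
  rewrite /= ?inE ?pq ?pc ?qc ?ap ?pq_edge ?qb.
Qed.

End SmallConfig.

Lemma adj_config_one_new_vertex (T : finType) (e : rel T) k (c c' : k.-tuple T) :
  symmetric e -> acyclic e -> k <= 3 -> is_config e c -> is_config e c' ->
  adj_config e c c' -> [set v in c] != [set v in c'] -> r_transition 1 c c'.
Proof.
move=> e_sym e_acyclic k_le3 c_config c'_config /forallP c_adj c_c'.
have [c_uniq _] := c_config; have [c'_uniq _] := c'_config.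
have tnth_c_eq := inj_eq (tuple_uniqP _ c_uniq).
have new_edge i : tnth c' i \notin c -> e (tnth c i) (tnth c' i).
  by case/orP: (c_adj i) => // /eqP <-; rewrite mem_tnth.
have new_edge' i : tnth c' i \notin c -> e (tnth c' i) (tnth c i).
  by rewrite e_sym; apply: new_edge.
have no_path2 := config_no_outer_path2 k_le3 c_config e_sym e_acyclic.
have no_path3 := config_no_outer_path3 k_le3 c_config e_sym e_acyclic.
rewrite /r_transition; case: (ltngtP #|[set v in c' | v \notin c]| 1) => // [N0|N2]; exfalso.
- move: N0; rewrite ltnS leqn0 => /eqP/cards0_eq N0; move/negP: c_c'; apply.
  rewrite eq_sym eqEcard !cardsE !(card_uniqP _) ?size_tuple // leqnn andbT.
  apply/subsetP => v; rewrite !inE => vc'; apply: contraT => vc.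
  by have := in_set0 v; rewrite -N0 inE vc' vc.
have [_ [_ [/setIdP [/tnthP [i ->] pc] /setIdP [/tnthP [j ->] qc] pq]]] :=
  card_gt1P N2.
have ci_cj : tnth c i != tnth c j by rewrite tnth_c_eq; apply: contraNneq pq => ->.
have [pq_edge | [w /tnthP [l ->] [wp _ pw wq]]] :=
  config_dist2 k_le3 c'_config (mem_tnth i c') (mem_tnth j c') pq.
  exact: (no_path3 _ _ _ _ (mem_tnth i c) (mem_tnth j c) ci_cj pc qc pq
            (new_edge i pc) pq_edge (new_edge' j qc)).
case: (boolP (tnth c' l \in c)) => [wc | wc].
  case: (eqVneq (tnth c i) (tnth c' l)) => [ci_w | ci_w].
    by apply: (no_path2 _ _ _ (mem_tnth i c) (mem_tnth j c) ci_cj qc _ (new_edge' j qc));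
      rewrite ci_w.
  exact: (no_path2 _ _ _ (mem_tnth i c) wc ci_w pc (new_edge i pc) pw).
have ci_cl : tnth c i != tnth c l by rewrite tnth_c_eq; apply: contraNneq wp => ->.
exact: (no_path3 _ _ _ _ (mem_tnth i c) (mem_tnth l c) ci_cl pc wc
          (ltac:(by rewrite eq_sym)) (new_edge i pc) pw (new_edge' l wc)).
Qed.

Section Relabel.

Variables (T : finType) (k : nat).

Definition relabel (c : k.-tuple T) (t : 'I_k -> 'I_k) : k.-tuple T :=
  [tuple tnth c (t i) | i < k].

Lemma mem_relabel c t v : injective t -> (v \in relabel c t) = (v \in c).
Proof.
move=> t_inj; apply/tnthP/tnthP => [[i ->]|[i ->]].
  by exists (t i); rewrite tnth_mktuple.
have /codomP [j ->] := injF_onto t_inj i.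
by exists j; rewrite tnth_mktuple.
Qed.

Lemma relabel_comp c t u : relabel (relabel c u) t = relabel c (u \o t).
Proof. by apply: eq_from_tnth => i; rewrite !tnth_mktuple. Qed.

Lemma relabel_of_eq_set (c c' : k.-tuple T) :
  uniq c' -> [set v in c] = [set v in c'] -> exists2 t, injective t & c' = relabel c t.
Proof.
move=> c'_uniq /setP c_c'.
have idx_lt i : index (tnth c' i) c < k.
  by rewrite -[k in _ < k](size_tuple c) index_mem -[_ \in c]inE c_c' inE mem_tnth.
have tnth_idx i : tnth c (Ordinal (idx_lt i)) = tnth c' i.
  by rewrite (tnth_nth (tnth c' i)) nth_index // -[_ \in c]inE c_c' inE mem_tnth.
exists (fun i => Ordinal (idx_lt i)).
  by move=> i j /(congr1 (tnth c)); rewrite !tnth_idx => /(tuple_uniqP _ c'_uniq).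
by apply: eq_from_tnth => i; rewrite tnth_mktuple tnth_idx.
Qed.

Variable e : rel T.

Lemma relabel_config c t : injective t -> is_config e c -> is_config e (relabel c t).
Proof.
move=> t_inj [c_uniq c_conn]; split.
  apply/tuple_uniqP => i j; rewrite !tnth_mktuple.
  by move/(tuple_uniqP _ c_uniq); apply: t_inj.
move=> x y; rewrite !mem_relabel // => xc yc.
by rewrite (eq_connect (e' := [rel a b | [&& e a b, a \in c & b \in c]])) ?c_conn //
  => a b /=; rewrite !mem_relabel.
Qed.

Lemma adj_config_relabel c c' t :
  adj_config e c c' -> adj_config e (relabel c t) (relabel c' t).
Proof. by move/forallP => c_c'; apply/forallP => i; rewrite !tnth_mktuple. Qed.

End Relabel.

Lemma walk_restrict (T : finType) (e : rel T) k :
  (forall c c' : k.-tuple T, is_config e c -> is_config e c' ->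
     adj_config e c c' -> [set v in c] != [set v in c'] -> r_transition 1 c c') ->
  forall (c0 : k.-tuple T) s, is_walk e c0 s ->
  exists2 t, injective t & exists s',
    [/\ is_walk e (relabel c0 t) s', restricted (relabel c0 t) s', size s' <= size s &
      forall v, (exists2 c, c \in c0 :: s & v \in c) ->
                 exists2 c, c \in relabel c0 t :: s' & v \in c].
Proof.
move=> one_new c0 s; elim: s c0 => [|c1 s IH] c0 [s_config s_path].
  have c0_config : is_config e c0 by apply: s_config; rewrite mem_head.
  exists id => //; exists [::]; split => //.
    by split => // c; rewrite inE => /eqP ->; apply: relabel_config.
  move=> v [c]; rewrite inE => /eqP -> vc.
  by exists (relabel c0 id); rewrite ?mem_head ?mem_relabel.
have c0_config : is_config e c0 by apply: s_config; rewrite mem_head.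
have c1_config : is_config e c1 by apply: s_config; rewrite !inE eqxx orbT.
move: s_path => /= /andP [c0_c1 s_path].
have [|t t_inj [s' [[s'_config s'_path] s'_restr s'_size s'_cover]]] := IH c1.
  by split => // c cs; apply: s_config; rewrite inE cs orbT.
case: (eqVneq [set v in c0] [set v in c1]) => [c0_c1_eq | c0_c1_neq].
  have [u u_inj c1_def] := relabel_of_eq_set (proj1 c1_config) c0_c1_eq.
  exists (u \o t); first exact: inj_comp.
  exists s'; rewrite -relabel_comp -c1_def; split => //; first exact: leqW.
  move=> v [c]; rewrite inE => /predU1P [-> vc | cs vc]; apply: s'_cover.
    by exists c1; rewrite ?mem_head // c1_def mem_relabel.
  by exists c; rewrite // inE cs orbT.
exists t => //; exists (relabel c1 t :: s'); split => //.
- split; last by rewrite /= adj_config_relabel.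
  move=> c; rewrite inE => /predU1P [->|]; [exact: relabel_config | exact: s'_config].
- rewrite /restricted /= s'_restr andbT.
  have := one_new _ _ c0_config c1_config c0_c1 c0_c1_neq; rewrite /r_transition => <-.
  by apply/eqP/eq_card => v; rewrite !inE !mem_relabel.
move=> v [c]; rewrite inE => /predU1P [-> vc|cs vc].
  by exists (relabel c0 t); rewrite ?mem_head ?mem_relabel.
have [c' c's' vc'] := s'_cover v (ex_intro2 _ _ c cs vc).
by exists c'; rewrite // inE c's' orbT.
Qed.

Section SpanningWalks.

Variables (T : finType) (e : rel T).
Hypotheses (e_sym : symmetric e) (e_irr : irreflexive e).

Lemma config_of_center k (c : k.-tuple T) a :
  uniq c -> a \in c ->
  (forall v, v \in c -> [|| v == a, e v a | [exists w in c, e v w && e w a]]) ->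
  is_config e c.
Proof.
move=> c_uniq ac near_a; split => //.
set r := [rel u v | [&& e u v, u \in c & v \in c]].
have r_sym : symmetric r by move=> u v /=; rewrite e_sym [(u \in c) && _]andbC.
have to_a v : v \in c -> connect r v a.
  move=> vc; case/or3P: (near_a v vc) => [/eqP -> //|va|/existsP [w /and3P [wc vw wa]]].
    by apply: connect1; rewrite /= va vc.
  by apply: (@connect_trans _ _ w); apply: connect1; rewrite /= ?vw ?wa ?vc ?wc.
move=> x y xc yc; apply: connect_trans (to_a x xc) _.
by rewrite (sym_connect_sym r_sym) to_a.
Qed.

Lemma config2_of_edge x y : e x y -> is_config e [tuple x; y].
Proof.
move=> xy; apply: (@config_of_center _ _ y); rewrite ?mem_seq2 ?eqxx ?orbT //.
  by rewrite /= inE andbT; apply: contraTneq xy => ->; rewrite e_irr.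
by move=> v; rewrite !inE => /orP [/eqP ->|/eqP ->]; rewrite ?xy ?eqxx /= ?orbT.
Qed.

Lemma config3_of_edges (c : 3.-tuple T) x y z :
  e x y -> z != x -> z != y -> e z x || e z y -> c =i [:: x; y; z] -> is_config e c.
Proof.
move=> xy zx zy z_near c_xyz.
have x_ne_y : x != y by apply: contraTneq xy => ->; rewrite e_irr.
have c_uniq : uniq c.
  apply: (@leq_size_uniq _ [:: x; y; z]); rewrite ?size_tuple //.
    by rewrite /= !inE negb_or x_ne_y eq_sym zx eq_sym zy.
  by move=> v; rewrite c_xyz.
apply: (@config_of_center _ _ y) => //; first by rewrite c_xyz !inE eqxx orbT.
move=> v; rewrite c_xyz !inE => /or3P [/eqP ->|/eqP ->|/eqP ->].
- by rewrite xy orbT.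
- by rewrite eqxx.
case/orP: z_near => [zx_edge|->]; last by rewrite orbT.
by apply/or3P/Or33/existsP; exists x; rewrite c_xyz !inE eqxx zx_edge xy.
Qed.

Lemma walk2_along_path x y p : e x y -> path e y p ->
  exists w : seq (2.-tuple T), is_walk e [tuple x; y] w /\
    forall v, v \in x :: y :: p -> exists2 c, c \in [tuple x; y] :: w & v \in c.
Proof.
elim: p x y => [|z p IH] x y xy /=.
  move=> _; exists [::]; split.
    by split => // c; rewrite inE => /eqP ->; apply: config2_of_edge.
  by move=> v v_xy; exists [tuple x; y]; rewrite ?mem_head.
case/andP => yz zp; have [w [[w_config w_path] w_cover]] := IH y z yz zp.
exists ([tuple y; z] :: w); split.
  split; last first.
    by rewrite /= w_path andbT; apply/forallP => -[[|[|i]] lti] //=; rewrite ?xy ?yz orbT.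
  by move=> c; rewrite inE => /predU1P [->|/w_config //]; apply: config2_of_edge.
move=> v; rewrite inE => /predU1P [->|/w_cover [c cw vc]].
  by exists [tuple x; y]; rewrite ?mem_head.
by exists c; rewrite // inE cw orbT.
Qed.

(* The agent on [y] advances to [y'] and the other two agents follow it, so
   that the shape hypotheses are restored for the triple [y, y', x]. *)
Lemma snake3_step (c : 3.-tuple T) x y z y' :
  e x y -> z != x -> z != y -> e z x || e z y -> c =i [:: x; y; z] ->
  e y y' -> y' != x -> y' != z ->
  exists2 c' : 3.-tuple T, adj_config e c c' & c' =i [:: y; y'; x].
Proof.
move=> xy zx zy z_near c_xyz yy' y'x y'z.
have x_ne_y : x != y by apply: contraTneq xy => ->; rewrite e_irr.
pose g v := if v == y then y' else if v == x then (if e z x then y else x)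
            else if v == z then (if e z x then x else y) else v.
exists (map_tuple g c).
  apply/forallP => i; rewrite tnth_map.
  have : tnth c i \in [:: x; y; z] by rewrite -c_xyz mem_tnth.
  rewrite /g !inE => /or3P [/eqP ->|/eqP ->|/eqP ->].
  - by rewrite (negbTE x_ne_y) eqxx; case: ifP; rewrite ?eqxx ?xy ?orbT.
  - by rewrite eqxx yy' orbT.
  rewrite (negbTE zy) (negbTE zx) eqxx; case: ifP => [-> | zx_edge]; first by rewrite orbT.
  by move: z_near; rewrite zx_edge /= => ->; rewrite orbT.
move=> v; rewrite /= (eq_mem_map g c_xyz) /= /g eqxx (negbTE x_ne_y) eqxx.
rewrite (negbTE zy) (negbTE zx) eqxx.
by case: (e z x); rewrite !inE; case: (v == x); case: (v == y); case: (v == y').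
Qed.

Lemma walk3_along_path x y z p (c : 3.-tuple T) :
  e x y -> z != x -> z != y -> e z x || e z y -> c =i [:: x; y; z] -> path e y p ->
  exists w : seq (3.-tuple T), is_walk e c w /\
    forall v, v \in x :: y :: p -> exists2 c', c' \in c :: w & v \in c'.
Proof.
elim: p x y z c => [|y' p IH] x y z c xy zx zy z_near c_xyz /=.
  move=> _; exists [::]; split.
    by split => // c'; rewrite inE => /eqP ->; apply: (config3_of_edges xy zx zy z_near).
  move=> v v_xy; exists c; rewrite ?mem_head // c_xyz.
  by move: v_xy; rewrite !inE => /orP [->|->]; rewrite ?orbT.
case/andP => yy' y'p.
have x_ne_y : x != y by apply: contraTneq xy => ->; rewrite e_irr.
suff [w [w_walk w_cover]] : exists w : seq (3.-tuple T), is_walk e c w /\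
    forall v, v \in y :: y' :: p -> exists2 c', c' \in c :: w & v \in c'.
  exists w; split => // v; rewrite inE => /predU1P [->|]; last exact: w_cover.
  by exists c; rewrite ?mem_head // c_xyz mem_head.
case: (eqVneq y' x) => [y'x | y'x].
  subst y'; apply: (IH y x z) => //; first by rewrite orbC.
  by move=> v; rewrite c_xyz !inE orbCA.
case: (eqVneq y' z) => [y'z | y'z].
  subst y'; apply: (IH y z x) => //; rewrite 1?eq_sym ?xy //.
  by move=> v; rewrite c_xyz !inE orbC -orbA.
have [c' c_c' c'_set] := snake3_step xy zx zy z_near c_xyz yy' y'x y'z.
have [w [[w_config w_path] w_cover]] :=
  IH y y' x c' yy' x_ne_y (ltac:(by rewrite eq_sym)) (ltac:(by rewrite xy)) c'_set y'p.
exists (c' :: w); split.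
  split; last by rewrite /= c_c'.
  move=> c2; rewrite inE => /predU1P [->|/w_config //].
  exact: (config3_of_edges xy zx zy z_near c_xyz).
by move=> v /w_cover [c2 c2w vc2]; exists c2; rewrite // inE c2w orbT.
Qed.

End SpanningWalks.

Lemma connected_covering_path (T : finType) (e : rel T) x :
  gconnected e -> exists p, path e x p /\ forall v, v \in x :: p.
Proof.
move=> e_conn; suff [p [xp p_enum]] : exists p, path e x p /\ {subset enum T <= x :: p}.
  by exists p; split => // v; rewrite p_enum ?mem_enum.
elim: (enum T) => [|v vs [p [xp p_vs]]]; first by exists [::].
have /connectP [q lq v_last] := e_conn (last x p) v.
exists (p ++ q); split; first by rewrite cat_path xp.
move=> u; rewrite inE => /predU1P [->|/p_vs]; last by rewrite -cat_cons mem_cat => ->.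
by rewrite v_last -last_cat mem_last.
Qed.

Lemma path_exit_edge (T : finType) (e : rel T) (P : pred T) a p :
  path e a p -> P a -> ~~ all P p -> exists u v, [/\ P u, ~~ P v & e u v].
Proof.
elim: p a => [|b p IH] a //= /andP [ab bp] Pa.
rewrite negb_and; case: (boolP (P b)) => Pb /=; first exact: IH bp Pb.
by exists a, b.
Qed.

Lemma spanning_len_exists (T : finType) (e : rel T) k :
  symmetric e -> irreflexive e -> gconnected e -> (k == 2) || (k == 3) -> k <= #|T| ->
  exists l, spanning_len e k l.
Proof.
move=> e_sym e_irr e_conn k23 k_le.
have card_le (s : seq T) : (forall v, v \in s) -> #|T| <= size s.
  move=> s_all; apply: leq_trans (card_size s); apply: subset_leq_card.
  by apply/subsetP => v _; apply: s_all.
have /card_gt0P [x0 _] : 0 < #|T| by apply: leq_trans k_le; case/orP: k23 => /eqP ->.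
have [[|x1 p] [/= x0p p_cover]] := connected_covering_path x0 e_conn.
  by have := leq_trans k_le (card_le _ p_cover); case/orP: k23 => /eqP ->.
have /andP [x0x1 x1p] := x0p.
case/orP: k23 k_le => /eqP -> k_le.
  have [w [w_walk w_cover]] := walk2_along_path e_sym e_irr x0x1 x1p.
  by exists (size w), [tuple x0; x1], w; split => // v; apply: w_cover.
have [u [z [u_in z_out uz]]] : exists u z, [/\ u \in [:: x0; x1], z \notin [:: x0; x1] & e u z].
  apply: (path_exit_edge (x0p : path e x0 (x1 :: p))); first exact: mem_head.
  apply: contraTN k_le => /allP p_in; rewrite -leqNgt (card_le [:: x0; x1]) // => v.
  by have := p_cover v; rewrite inE => /predU1P [->|/p_in]; rewrite ?mem_head.
move: z_out; rewrite !inE negb_or => /andP [zx0 zx1].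
have z_near : e z x0 || e z x1.
  by move: u_in; rewrite !inE => /orP [] /eqP u_def; rewrite -u_def (e_sym z u) uz ?orbT.
have [w [w_walk w_cover]] :=
  walk3_along_path e_sym e_irr x0x1 zx0 zx1 z_near (c := [tuple x0; x1; z]) (fun=> erefl) x1p.
by exists (size w), [tuple x0; x1; z], w; split => // v; apply: w_cover.
Qed.

Lemma is_min_exists (P : nat -> Prop) n : P n -> exists m, is_min P m.
Proof.
move=> Pn; apply: NNPP => no_min.
suff not_P l : ~ P l by exact: not_P Pn.
elim/ltn_ind: l => l IH Pl; apply: no_min; exists l; split => // l' Pl'.
by rewrite leqNgt; apply/negP => lt_l'l; exact: IH lt_l'l Pl'.
Qed.

Lemma is_min_dominated (P Q : nat -> Prop) m :
  (forall l, Q l -> P l) -> (forall l, P l -> exists2 l', l' <= l & Q l') ->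
  is_min P m <-> is_min Q m.
Proof.
move=> QP PQ; split => [[Pm m_min] | [Qm m_min]].
  have [l l_le Ql] := PQ m Pm.
  have l_eq : l = m by apply/eqP; rewrite eqn_leq l_le (m_min _ (QP _ Ql)).
  by subst l; split => // l' /QP; apply: m_min.
split; first exact: QP.
by move=> l /PQ [l' l'_le /m_min m_le]; apply: leq_trans m_le l'_le.
Qed.

Theorem mainTheorem4 (T : finType) (e : rel T) (k : nat) :
  symmetric e -> irreflexive e -> is_tree e ->
  (k == 2) || (k == 3) -> k <= #|T| ->
  (forall c c' : k.-tuple T, is_config e c -> is_config e c' ->
     adj_config e c c' -> [set v in c] != [set v in c'] ->
     r_transition 1 c c') /\
  ((exists m, h_is e k m) /\ (forall m, h_is e k m <-> hr_is e k m)).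
Proof.
move=> e_sym e_irr [e_conn e_acyclic] k23 k_le.
have k_le3 : k <= 3 by case/orP: k23 => /eqP ->.
have one_new c c' := @adj_config_one_new_vertex T e k c c' e_sym e_acyclic k_le3.
split=> //; split.
  have [l span_l] := spanning_len_exists e_sym e_irr e_conn k23 k_le.
  exact: is_min_exists span_l.
move=> m; apply: is_min_dominated => [l [c0 [s [walk span _ size_s]]] | l].
  by exists c0, s.
move=> [c0 [s [walk span <-]]].
have [t _ [s' [walk' restr' size' cover']]] := walk_restrict one_new walk.
exists (size s') => //; exists (relabel c0 t), s'; split => // v.
exact/cover'/span.
Qed.
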